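(* Let $(A,B)\in\mathcal{AB}$ and let $\mu$ be a matching that is component-wise individually rational at $(A,B)$. Then $\mu$ is unambiguously efficient at $(A,B)$ if and only if there is no cycle of $\mu$ that is both component-wise individually rational at $(A,B)$ and Pareto-improving.
   Context: Setup. $I=\{1,\dots,n\}$ is a finite set of agents and $O$ a finite set of objects. Each agent $i$ is endowed with a nonempty set $\Omega_i\subseteq O$; the sets $\Omega_i$ are pairwise disjoint and $\bigcup_{i\in I}\Omega_i=O$. A matching is a map $\mu:I\to 2^O$ with $\mu(i)\cap\mu(j)=\emptyset$ for $i\neq j$ and $|\mu(i)|=|\Omega_i|$ for every $i$; $\mathcal M$ is the set of matchings. Agent $i$'s consumption set is $\mathcal X_i=\{X\subseteq O:|X|=|\Omega_i|\}$; a preference of $i$ is a complete, transitive, reflexive relation $R_i$ on $\mathcal X_i$ with strict part $P_i$. A marginal preference of $i$ is a weak order $\succsim_i$ on $O$. $R_i$ is responsive to $\succsim_i$ if for all $o,p\in O$ and all $Q\in\mathcal X_i$ with $o\in Q$, $p\notin Q$: $Q\mathrel{R_i}(Q\setminus\{o\})\cup\{p\}$ iff $o\succsim_i p$. Given a profile $R$, $\mu'$ Pareto-improves $\mu$ if $\mu'(i)\mathrel{R_i}\mu(i)$ for all $i$ and $\mu'(i)\mathrel{P_i}\mu(i)$ for some $i$; $\mu$ is Pareto-efficient if no matching Pareto-improves it. Given a profile $\succsim$ of marginal preferences, $\mu$ is unambiguously efficient if it is Pareto-efficient at every profile $R$ such that each $R_i$ is responsive to $\succsim_i$. The matching $\mu$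 is component-wise individually rational at $\succsim$ if for every $i\in I$ and every $\omega\in\Omega_i$, $|\{o\in\mu(i):o\succsim_i\omega\}|\ge|\{o\in\Omega_i:o\succsim_i\omega\}|$. Trichotomous profiles. $\mathcal{AB}_i$ is the set of pairs $(A_i,B_i)$ of disjoint subsets of $O$ with $\Omega_i\subseteq A_i\cup B_i$, and $\mathcal{AB}=\times_{i\in I}\mathcal{AB}_i$. A pair $(A_i,B_i)$ induces the marginal preference $\succsim_i$ in which all objects of $A_i$ are indifferent to each other and strictly preferred to all objects of $B_i$, which are indifferent to each other and strictly preferred to all objects of $O\setminus(A_i\cup B_i)$, which are indifferent to each other. Properties ''at $(A,B)$'' refer to the induced marginal profile. Cycles. Given a matching $\mu$, a cycle of $\mu$ is $C=(i_1,o_1,i_2,o_2,\dots,i_L,o_L)$ with distinct agents and distinct objects such that for each $l\in\{2,\dots,L\}$, $o_{l-1}\in\mu(i_l)$ and $o_l\notin\mu(i_l)$, and $o_L\in\mu(i_1)$. The matching $\mu+C$ is obtained from $\mu$ by replacing, for each $l\in\{2,\dots,L\}$, $o_{l-1}$ in $\mu(i_l)$ by $o_l$, and replacing $o_L$ in $\mu(i_1)$ by $o_1$. The cycle $C$ is component-wise individually rational at $(A,B)$ if $o_l\in A_{i_l}\cup B_{i_l}$ for every $l$. $C$ increases (resp. decreases) $i$'s welfare if $|(\mu+C)(i)\cap A_i|>|\mu(i)\cap A_i|$ (resp. $<$); $C$ is Pareto-improving if it increases some agent's welfare and decreases no agent's welfare. *)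

From mathcomp Require Import all_boot.
Set Implicit Arguments. Unset Strict Implicit. Unset Printing Implicit Defensive.

Section Model.
Variables (I O : finType).

Definition endowment (Omega : I -> {set O}) : Prop :=
  [/\ (forall i, Omega i != set0),
      (forall i j, i != j -> [disjoint Omega i & Omega j]) &
      (\bigcup_(i in I) Omega i = [set: O])].

Definition matching (Omega : I -> {set O}) (mu : I -> {set O}) : Prop :=
  (forall i j, i != j -> [disjoint mu i & mu j]) /\
  (forall i, #|mu i| = #|Omega i|).

Definition consumption (Omega : I -> {set O}) (i : I) (X : {set O}) : bool :=
  #|X| == #|Omega i|.

Definition preference (Omega : I -> {set O}) (i : I)
    (Ri : {set O} -> {set O} -> Prop) : Prop :=
  [/\ (forall X Y, consumption Omega i X -> consumption Omega i Y ->
         Ri X Y \/ Ri Y X),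
      (forall X Y Z, consumption Omega i X -> consumption Omega i Y ->
         consumption Omega i Z -> Ri X Y -> Ri Y Z -> Ri X Z) &
      (forall X, consumption Omega i X -> Ri X X)].

Definition strict (Ri : {set O} -> {set O} -> Prop) (X Y : {set O}) : Prop :=
  Ri X Y /\ ~ Ri Y X.

Definition responsive (Omega : I -> {set O}) (i : I)
    (Ri : {set O} -> {set O} -> Prop) (mi : rel O) : Prop :=
  forall (o p : O) (Q : {set O}), consumption Omega i Q -> o \in Q -> p \notin Q ->
    (Ri Q (p |: (Q :\ o)) <-> mi o p).

Definition pareto_improves (R : I -> {set O} -> {set O} -> Prop)
    (mu' mu : I -> {set O}) : Prop :=
  (forall i, R i (mu' i) (mu i)) /\ (exists i, strict (R i) (mu' i) (mu i)).

Definition pareto_efficient (Omega : I -> {set O})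
    (R : I -> {set O} -> {set O} -> Prop) (mu : I -> {set O}) : Prop :=
  forall mu', matching Omega mu' -> ~ pareto_improves R mu' mu.

Definition unamb_efficient (Omega : I -> {set O}) (m : I -> rel O)
    (mu : I -> {set O}) : Prop :=
  forall R : I -> {set O} -> {set O} -> Prop,
    (forall i, preference Omega i (R i)) ->
    (forall i, responsive Omega i (R i) (m i)) ->
    pareto_efficient Omega R mu.

Definition cw_IR (Omega : I -> {set O}) (m : I -> rel O) (mu : I -> {set O}) : Prop :=
  forall i, forall w, w \in Omega i ->
    #|[set o in Omega i | m i o w]| <= #|[set o in mu i | m i o w]|.

Definition AB_profile (Omega : I -> {set O}) (A B : I -> {set O}) : Prop :=
  forall i, [disjoint A i & B i] /\ Omega i \subset A i :|: B i.

Definition ab_level (A B : I -> {set O}) (i : I) (o : O) : nat :=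
  if o \in A i then 2 else if o \in B i then 1 else 0.

Definition ab_marginal (A B : I -> {set O}) (i : I) : rel O :=
  fun o p => ab_level A B i p <= ab_level A B i o.

(* Cycles. A cycle C = (i_1,o_1,...,i_L,o_L) is a nonempty sequence c of pairs,
   with c`_k = (i_{k+1}, o_{k+1}) (0-indexed). *)

Section Cycles.
Variables (mu : I -> {set O}) (x0 : I * O) (c : seq (I * O)).
Let C := x0 :: c.
Let L := size C.
Definition cag (k : nat) : I := (nth x0 C k).1.
Definition cob (k : nat) : O := (nth x0 C k).2.
(* The object that agent at position k gives up: o_{l-1} for l >= 2, o_L for l = 1. *)
Definition cprev (k : nat) : O := if k == 0 then cob L.-1 else cob k.-1.

Definition is_cycle : Prop :=
  [/\ uniq (map fst C), uniq (map snd C),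
      (forall k, 0 < k < L -> cob k.-1 \in mu (cag k) /\ cob k \notin mu (cag k)) &
      cob L.-1 \in mu (cag 0)].

Definition add_cycle : I -> {set O} :=
  fun i => let k := index i (map fst C) in
    if k < L then cob k |: (mu i :\ cprev k) else mu i.
End Cycles.

Definition cycle_cw_IR (A B : I -> {set O}) (x0 : I * O) (c : seq (I * O)) : Prop :=
  forall k, k < size (x0 :: c) ->
    cob x0 c k \in A (cag x0 c k) :|: B (cag x0 c k).

Definition increases (A : I -> {set O}) (mu : I -> {set O}) x0 c (i : I) : Prop :=
  #|mu i :&: A i| < #|add_cycle mu x0 c i :&: A i|.
Definition decreases (A : I -> {set O}) (mu : I -> {set O}) x0 c (i : I) : Prop :=
  #|add_cycle mu x0 c i :&: A i| < #|mu i :&: A i|.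

Definition pareto_improving_cycle (A : I -> {set O}) (mu : I -> {set O}) x0 c : Prop :=
  (exists i, increases A mu x0 c i) /\ (forall i, ~ decreases A mu x0 c i).

End Model.

From mathcomp Require Import all_boot zify.
Set Implicit Arguments. Unset Strict Implicit. Unset Printing Implicit Defensive.

(* Under a trichotomous marginal (A_i, B_i), responsiveness alone compares
   bundles: by a chain of single swaps, a bundle inside A_i :|: B_i with at
   least as many A_i-objects is weakly preferred, and strictly when it has more
   of them or when the other bundle leaves A_i :|: B_i.

   An IR Pareto-improving cycle is therefore a Pareto improvement for the
   responsive additive utility scoring objects of A_i by 2 and of B_i by 1.
   Conversely, if mu' Pareto-improves mu at some responsive profile, every agent
   gains A-objects or keeps their number while staying inside A :|: B, and some
   agent gains strictly.  Following each received object back to the agent who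
   gave it up produces closed trades whose swaps are all weakly improving.  A
   trade that visits an agent twice splits into two shorter ones, one of which
   stays weakly improving at that agent; a trade through distinct agents with a
   strict gain is the required cycle, and a trade without strict gain can be
   undone, which leaves fewer moved objects. *)

Section FinsetCounting.
Variable T : finType.
Implicit Types (X Y Z W : {set T}) (x y : T).

Lemma disjoint_setsP X Y :
  reflect (forall x, x \in X -> x \in Y -> False) [disjoint X & Y].
Proof.
rewrite -setI_eq0; apply: (iffP eqP) => [XY0 x xX xY | h].
  by have := in_set0 x; rewrite -XY0 inE xX xY.
by apply/setP => x; rewrite !inE; apply/negP => /andP[/h].
Qed.

Lemma cardsI_swap X Z x y : x \in X -> y \notin X ->
  #|(y |: (X :\ x)) :&: Z| + (x \in Z) = #|X :&: Z| + (y \in Z).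
Proof.
move=> xX yX; rewrite (cardsD1 x (X :&: Z)) (cardsD1 y ((y |: (X :\ x)) :&: Z)).
have -> : (y |: (X :\ x)) :&: Z :\ y = X :&: Z :\ x.
  apply/setP => z; rewrite !inE; case: (z =P y) => [->|_] /=.
    by rewrite (negbTE yX) !andbF.
  by rewrite andbA.
rewrite !inE eqxx xX /=; lia.
Qed.

Lemma cards_swap X x y : x \in X -> y \notin X -> #|y |: (X :\ x)| = #|X|.
Proof.
move=> xX yX; have := cardsI_swap [set: T] xX yX.
by rewrite !setIT !inE => /addIn.
Qed.

Lemma cardsI_split X Y W : #|X :&: W| = #|X :&: Y :&: W| + #|(X :\: Y) :&: W|.
Proof. by rewrite -(cardsID Y (X :&: W)) setIAC setIDAC. Qed.

Lemma cardsD_sym X Y : #|X| = #|Y| -> #|X :\: Y| = #|Y :\: X|.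
Proof. by move=> XY; rewrite !cardsD XY setIC. Qed.

Lemma card_setI_uniq (s : seq T) Z : uniq s ->
  #|Z :&: [set w in s]| = count (mem Z) s.
Proof.
move=> us; have -> : Z :&: [set w in s] = [set w in filter (mem Z) s].
  by apply/setP=> w; rewrite !inE mem_filter.
by rewrite cardsE (card_uniqP _) ?filter_uniq // size_filter.
Qed.

Lemma exists_in_of_cardsI_gt0 X Y : 0 < #|X :&: Y| -> exists2 x, x \in X & x \in Y.
Proof. by rewrite card_gt0 => /set0Pn[x]; rewrite inE => /andP[]; exists x. Qed.

Lemma exists_notin_of_cardsI_lt X Y : #|X :&: Y| < #|X| -> exists2 x, x \in X & x \notin Y.
Proof.
rewrite -(cardsID Y X) -[ltnLHS]addn0 ltn_add2l card_gt0 => /set0Pn[x].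
by rewrite inE => /andP[xY xX]; exists x.
Qed.

Lemma cardsI_lt X Y x : x \in X -> x \notin Y -> #|X :&: Y| < #|X|.
Proof.
move=> xX xY; apply: proper_card; rewrite properEneq subsetIl andbT.
by apply: contraNneq xY => XYX; rewrite -XYX inE in xX; case/andP: xX.
Qed.

Lemma cardsI_exchange X Y Z :
  #|X :&: Z| + #|(Y :\: X) :&: Z| = #|Y :&: Z| + #|(X :\: Y) :&: Z|.
Proof. by rewrite (cardsI_split X Y) (cardsI_split Y X) [Y :&: X]setIC; lia. Qed.

End FinsetCounting.

Section CyclePositions.
Variables (I O : finType) (x0 : I * O) (c : seq (I * O)).
Local Notation C := (x0 :: c).
Local Notation L := (size (x0 :: c)).

Definition prev_pos k := if k == 0 then L.-1 else k.-1.
Definition next_pos k := if k.+1 < L then k.+1 else 0.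

Lemma next_pos_lt k : k < L -> next_pos k < L.
Proof. by rewrite /next_pos; case: ifP => /=; lia. Qed.

Lemma next_posK k : k < L -> prev_pos (next_pos k) = k.
Proof. by rewrite /next_pos; case: ifP => [//|/negbT]; rewrite /prev_pos /=; lia. Qed.

Lemma cprevE k : cprev x0 c k = cob x0 c (prev_pos k).
Proof. by rewrite /cprev /prev_pos; case: eqP. Qed.

Lemma cag_nth k : cag x0 c k = nth x0.1 (map fst C) k.
Proof.
rewrite /cag; have [lt|ge] := ltnP k L; first by rewrite (nth_map x0).
by rewrite !nth_default ?size_map.
Qed.

Lemma index_cag k : k < L -> uniq (map fst C) -> index (cag x0 c k) (map fst C) = k.
Proof. by move=> lt u; rewrite cag_nth index_uniq ?size_map. Qed.

Lemma cag_inj a b : a < L -> b < L -> uniq (map fst C) ->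
  cag x0 c a = cag x0 c b -> a = b.
Proof. by move=> la lb u e; rewrite -(index_cag la u) -(index_cag lb u) e. Qed.

Lemma cob_inj a b : a < L -> b < L -> uniq (map snd C) ->
  cob x0 c a = cob x0 c b -> a = b.
Proof.
move=> la lb u; rewrite /cob -!(nth_map x0 x0.2) //.
by move/eqP; rewrite nth_uniq ?size_map // => /eqP.
Qed.

Lemma cycle_agentP i : i \in map fst C -> exists2 k, k < L & i = cag x0 c k.
Proof.
move=> iC; exists (index i (map fst C)); first by rewrite -(size_map fst) index_mem.
by rewrite cag_nth nth_index.
Qed.

Lemma add_cycle_at mu k : k < L -> uniq (map fst C) ->
  add_cycle mu x0 c (cag x0 c k) = cob x0 c k |: (mu (cag x0 c k) :\ cprev x0 c k).
Proof. by move=> lt u; rewrite /add_cycle index_cag // lt. Qed.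

Lemma add_cycle_out mu i : i \notin map fst C -> add_cycle mu x0 c i = mu i.
Proof. by move=> iC; rewrite /add_cycle memNindex // size_map ltnn. Qed.

Lemma cycle_nth_prev (e : rel (I * O)) : cycle e C ->
  forall k, k < L -> e (nth x0 C (prev_pos k)) (nth x0 C k).
Proof.
move=> /= /(pathP x0) eC k lt.
have nthC j : j < L -> nth x0 (x0 :: rcons c x0) j = nth x0 C j.
  by move=> lj; rewrite -rcons_cons nth_rcons /= lj.
case: k lt => [|k] lt.
  have := eC (size c); rewrite size_rcons ltnSn => /(_ isT).
  by rewrite nthC // nth_rcons ltnn eqxx.
have := eC k; rewrite size_rcons ltnW // => /(_ isT).
by rewrite nthC ?(ltnW lt) // nth_rcons -ltnS lt.
Qed.

Lemma next_pos_exists p : p \in C ->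
  exists k, [/\ k < L, nth x0 C (prev_pos k) = p & nth x0 C k = next C p].
Proof.
move=> pC; have hi : index p C < L by rewrite index_mem.
rewrite next_nth pC.
have [lt|ge] := ltnP (index p C).+1 L.
  by exists (index p C).+1; rewrite /prev_pos /= nth_index.
exists 0; split => //.
  have -> : prev_pos 0 = index p C by rewrite /prev_pos /=; move: hi ge => /=; lia.
  by rewrite nth_index.
by rewrite /= nth_default //; move: hi ge => /=; lia.
Qed.

End CyclePositions.

Section AdditiveUtility.
Variables (I O : finType) (Omega A B : I -> {set O}).
Implicit Types (X : {set O}) (x y : O) (i : I).

Definition ab_utility i X := \sum_(x in X) ab_level A B i x.
Definition ab_utility_pref i X Y : Prop := ab_utility i Y <= ab_utility i X.

Lemma ab_utility_swap i X x y : x \in X -> y \notin X ->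
  ab_utility i (y |: (X :\ x)) + ab_level A B i x = ab_utility i X + ab_level A B i y.
Proof.
move=> xX yX; rewrite /ab_utility (big_setD1 x xX) big_setU1 /=; first lia.
by rewrite !inE negb_and yX orbT.
Qed.

Lemma ab_utility_preference i : preference Omega i (ab_utility_pref i).
Proof.
split=> [X Y _ _|X Y Z _ _ _|X _]; rewrite /ab_utility_pref //.
  by case: leqP => [|/ltnW]; [left|right].
by move=> YX ZY; apply: leq_trans ZY YX.
Qed.

Lemma ab_utility_responsive i : responsive Omega i (ab_utility_pref i) (ab_marginal A B i).
Proof.
move=> x y Q _ xQ yQ; rewrite /ab_utility_pref /ab_marginal.
by have := ab_utility_swap i xQ yQ; split; lia.
Qed.

Lemma ab_level_le i x y : (x \in A i) <= (y \in A i) -> y \in A i :|: B i ->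
  ab_level A B i x <= ab_level A B i y.
Proof.
rewrite /ab_level inE.
by case: (x \in A i); case: (y \in A i); case: (x \in B i); case: (y \in B i).
Qed.

Lemma ab_level_lt i x y : y \in A i -> x \notin A i -> ab_level A B i x < ab_level A B i y.
Proof. by rewrite /ab_level => -> /negbTE ->; case: (x \in B i). Qed.

End AdditiveUtility.

Section CycleSwap.
Variables (I O : finType) (mu : I -> {set O}) (x0 : I * O) (c : seq (I * O)).
Hypothesis mu_disj : forall i j, i != j -> [disjoint mu i & mu j].
Hypothesis C_cycle : is_cycle mu x0 c.
Local Notation C := (x0 :: c).
Local Notation L := (size (x0 :: c)).
Local Notation cag := (cag x0 c).
Local Notation cob := (cob x0 c).
Local Notation cprev := (cprev x0 c).
Local Notation mu' := (add_cycle mu x0 c).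

Lemma cycle_gives k : k < L -> cprev k \in mu (cag k).
Proof.
case: C_cycle => _ _ mid last; case: k => [//|k] lk.
by case: (mid k.+1).
Qed.

Lemma cycle_owner k : k < L -> cob k \in mu (cag (next_pos x0 c k)).
Proof. by move=> lk; have := cycle_gives (next_pos_lt lk); rewrite cprevE next_posK. Qed.

Lemma add_cycle_nil : c = [::] -> mu' =1 mu.
Proof.
move=> c0 i; case: (boolP (i \in map fst C)) => iC; last exact: add_cycle_out.
have [k lk ->] := cycle_agentP iC; case: C_cycle => u _ _ _.
rewrite add_cycle_at //; move: lk (cycle_gives lk); rewrite cprevE c0.
by case: k => //= _ ?; rewrite setD1K.
Qed.

Hypothesis c_nonnil : c != [::].

Lemma cycle_receives k : k < L -> cob k \notin mu (cag k).
Proof.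
move=> lk; case: C_cycle => u _ _ _.
have next_ne : cag (next_pos x0 c k) != cag k.
  apply/eqP => /(cag_inj (next_pos_lt lk) lk u); rewrite /next_pos.
  by case: (c) c_nonnil lk => // ? ?; case: ifP => /=; lia.
by rewrite (disjointFr (mu_disj next_ne) (cycle_owner lk)).
Qed.

Lemma add_cycle_cardsI Z k : k < L ->
  #|mu' (cag k) :&: Z| + (cprev k \in Z) = #|mu (cag k) :&: Z| + (cob k \in Z).
Proof.
move=> lk; case: C_cycle => u _ _ _.
by rewrite add_cycle_at // cardsI_swap ?cycle_gives ?cycle_receives.
Qed.

Lemma add_cycle_card i : #|mu' i| = #|mu i|.
Proof.
case: (boolP (i \in map fst C)) => iC; last by rewrite add_cycle_out.
have [k lk ->] := cycle_agentP iC; case: C_cycle => u _ _ _.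
by rewrite add_cycle_at // cards_swap ?cycle_gives ?cycle_receives.
Qed.

Lemma mem_add_cycle i o : o \in mu' i ->
  (exists2 k, k < L & i = cag k /\ o = cob k) \/
  (o \in mu i /\ forall k, k < L -> i = cag k -> o != cprev k).
Proof.
case: C_cycle => u _ _ _.
case: (boolP (i \in map fst C)) => iC; last first.
  rewrite add_cycle_out // => oi; right; split => // k lk ik.
  by move: iC; rewrite ik cag_nth mem_nth // size_map.
have [k lk ->] := cycle_agentP iC.
rewrite add_cycle_at // => /setU1P[->|]; first by left; exists k.
rewrite !inE => /andP[ne om]; right; split => // k' lk' /(cag_inj lk lk' u) <-.
exact: ne.
Qed.

Lemma add_cycle_disjoint i j : i != j -> [disjoint mu' i & mu' j].
Proof.
case: C_cycle => u1 u2 _ _.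
have moved_kept i1 i2 o : i1 != i2 ->
    (exists2 k, k < L & i1 = cag k /\ o = cob k) ->
    (o \in mu i2 /\ forall k, k < L -> i2 = cag k -> o != cprev k) -> False.
  move=> ne [k lk [ei eo]] [om nprev]; subst i1 o.
  have [e|e] := eqVneq i2 (cag (next_pos x0 c k)).
    by have := nprev _ (next_pos_lt lk) e; rewrite cprevE next_posK // eqxx.
  by have := disjointFr (mu_disj e) om; rewrite cycle_owner.
move=> ne; apply/disjoint_setsP => o /mem_add_cycle[] H1 /mem_add_cycle[] H2.
- case: H1 H2 ne => k lk [-> ek] [k' lk' [-> ek']].
  by rewrite (cob_inj lk lk' u2 (etrans (esym ek) ek')) eqxx.
- exact: (moved_kept i j o).
- by apply: (moved_kept j i o); rewrite 1?eq_sym.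
- by case: H1 H2 => om1 _ [om2 _]; rewrite (disjointFr (mu_disj ne) om1) in om2.
Qed.

End CycleSwap.

Section CycleUtility.
Variables (I O : finType) (A B mu : I -> {set O}) (x0 : I * O) (c : seq (I * O)).
Hypothesis mu_disj : forall i j, i != j -> [disjoint mu i & mu j].
Hypothesis C_cycle : is_cycle mu x0 c.
Hypothesis C_IR : cycle_cw_IR A B x0 c.
Hypothesis c_nonnil : c != [::].
Local Notation L := (size (x0 :: c)).
Local Notation cag := (cag x0 c).
Local Notation mu' := (add_cycle mu x0 c).

Lemma add_cycle_utility k : k < L ->
  ab_utility A B (cag k) (mu' (cag k)) + ab_level A B (cag k) (cprev x0 c k) =
  ab_utility A B (cag k) (mu (cag k)) + ab_level A B (cag k) (cob x0 c k).
Proof.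
move=> lk; have [u _ _ _] := C_cycle; rewrite add_cycle_at //.
by apply: ab_utility_swap; [apply: cycle_gives | apply: cycle_receives].
Qed.

Lemma add_cycle_utility_ge i : ~ decreases A mu x0 c i ->
  ab_utility_pref A B i (mu' i) (mu i).
Proof.
rewrite /decreases /ab_utility_pref => no_down.
case: (boolP (i \in map fst (x0 :: c))) => iC; last by rewrite add_cycle_out.
have [k lk ei] := cycle_agentP iC; rewrite {i iC}ei in no_down *.
have countA := add_cycle_cardsI mu_disj C_cycle c_nonnil (A (cag k)) lk.
have keepA : (cprev x0 c k \in A (cag k)) <= (cob x0 c k \in A (cag k)).
  by move: countA no_down; case: (cprev _ _ _ \in _); case: (cob _ _ _ \in _) => //=; lia.
by have := ab_level_le keepA (C_IR lk); have := add_cycle_utility lk; lia.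
Qed.

Lemma add_cycle_utility_gt i : increases A mu x0 c i ->
  strict (ab_utility_pref A B i) (mu' i) (mu i).
Proof.
rewrite /increases /strict /ab_utility_pref.
case: (boolP (i \in map fst (x0 :: c))) => iC; last by rewrite add_cycle_out // ltnn.
have [k lk ->] := cycle_agentP iC.
have := add_cycle_cardsI mu_disj C_cycle c_nonnil (A (cag k)) lk.
have := add_cycle_utility lk.
case: (boolP (cprev _ _ _ \in _)) => /= gA; case: (boolP (cob _ _ _ \in _)) => /= rA; try lia.
by have := ab_level_lt B rA gA; lia.
Qed.

End CycleUtility.

Section Forward.
Variables (I O : finType) (Omega A B mu : I -> {set O}).

Lemma IR_improving_cycle_pareto_improves x0 c :
  matching Omega mu -> is_cycle mu x0 c ->
  cycle_cw_IR A B x0 c -> pareto_improving_cycle A mu x0 c ->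
  matching Omega (add_cycle mu x0 c) /\
  pareto_improves (ab_utility_pref A B) (add_cycle mu x0 c) mu.
Proof.
move=> [mu_disj mu_card] C_cycle C_IR [[i0 up] no_down].
have [c0|c_nonnil] := eqVneq c [::].
  by move: up; rewrite /increases (add_cycle_nil C_cycle c0) ltnn.
split; first split=> [i j|i].
- exact: add_cycle_disjoint.
- by rewrite add_cycle_card.
split=> [i|]; first exact: add_cycle_utility_ge.
by exists i0; apply: add_cycle_utility_gt.
Qed.

Lemma unamb_efficient_no_IR_improving_cycle x0 c :
  matching Omega mu -> unamb_efficient Omega (ab_marginal A B) mu ->
  ~ [/\ is_cycle mu x0 c, cycle_cw_IR A B x0 c & pareto_improving_cycle A mu x0 c].
Proof.
move=> mu_match UE [C_cycle C_IR C_up].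
have [mu'_match improves] := IR_improving_cycle_pareto_improves mu_match C_cycle C_IR C_up.
apply: (UE (ab_utility_pref A B) _ _ _ mu'_match improves) => i.
  exact: ab_utility_preference.
exact: ab_utility_responsive.
Qed.

End Forward.

Section SwapTowards.
Variables (T : finType) (A X Y : {set T}).
Hypothesis XY_card : #|X| = #|Y|.

Let countA_split : #|X :&: A| = #|X :&: Y :&: A| + #|(X :\: Y) :&: A| /\
                   #|Y :&: A| = #|X :&: Y :&: A| + #|(Y :\: X) :&: A|.
Proof. by rewrite (cardsI_split X Y) (cardsI_split Y X) [Y :&: X]setIC. Qed.

Let cardsDI_le Z W : #|(Z :\: W) :&: A| <= #|Z :\: W|.
Proof. exact/subset_leq_card/subsetIl. Qed.

Lemma swap_partner_exists x : #|X :&: A| <= #|Y :&: A| ->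
  x \in X -> x \notin Y -> x \notin A ->
  exists y, [/\ y \in Y, y \notin X & #|X :&: A| + (y \in A) <= #|Y :&: A|].
Proof.
move=> le xX xY xA; have [splitX splitY] := countA_split.
have lt_XD : #|(X :\: Y) :&: A| < #|X :\: Y| by apply: (cardsI_lt (x := x)); rewrite ?inE ?xY.
have [lt|ge] := ltnP #|X :&: A| #|Y :&: A|.
  have /card_gt0P[y] : 0 < #|Y :\: X|.
    by rewrite -(cardsD_sym XY_card); apply: leq_ltn_trans lt_XD.
  by rewrite inE => /andP[yX yY]; exists y; split => //; case: (y \in A); lia.
have /exists_notin_of_cardsI_lt[y] : #|(Y :\: X) :&: A| < #|Y :\: X|.
  by rewrite -(cardsD_sym XY_card); lia.
rewrite inE => /andP[yX yY] /negbTE yA.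
by exists y; rewrite yA addn0.
Qed.

Lemma swap_towards_exists : #|X :&: A| <= #|Y :&: A| -> 0 < #|X :\: Y| ->
  exists x y, [/\ x \in X :\: Y, y \in Y :\: X, (x \in A) <= (y \in A)
                & #|X :&: A| + (y \in A) <= #|Y :&: A| + (x \in A)].
Proof.
move=> le XY_gt0; have [splitX splitY] := countA_split.
have [/exists_notin_of_cardsI_lt[x xXY xA] | ge] :=
  ltnP #|(X :\: Y) :&: A| #|X :\: Y|.
  move: (xXY); rewrite inE => /andP[xY xX].
  have [y [yY yX le_y]] := swap_partner_exists le xX xY xA.
  by exists x, y; split; rewrite // ?inE ?yX ?yY ?(negbTE xA) ?addn0.
have XY_D := cardsD_sym XY_card.
have /exists_in_of_cardsI_gt0[x xXY xA] : 0 < #|(X :\: Y) :&: A| by lia.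
have /exists_in_of_cardsI_gt0[y yYX yA] : 0 < #|(Y :\: X) :&: A|.
  by have := cardsDI_le X Y; have := cardsDI_le Y X; lia.
exists x, y; rewrite xA yA; split => //.
by have := cardsDI_le X Y; have := cardsDI_le Y X; lia.
Qed.

Lemma strict_swap_exists : #|X :&: A| < #|Y :&: A| ->
  exists x y, [/\ x \in X :\: Y, y \in Y :\: X, x \notin A & y \in A].
Proof.
move=> lt; have [splitX splitY] := countA_split.
have /exists_notin_of_cardsI_lt[x xXY xA] : #|(X :\: Y) :&: A| < #|X :\: Y|.
  by rewrite (cardsD_sym XY_card); have := cardsDI_le Y X; lia.
have /exists_in_of_cardsI_gt0[y yYX yA] : 0 < #|(Y :\: X) :&: A| by lia.
by exists x, y.
Qed.

End SwapTowards.

Section ResponsiveDominance.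
Variables (I O : finType) (Omega A B : I -> {set O}) (i : I).
Variable R : {set O} -> {set O} -> Prop.
Hypothesis R_pref : preference Omega i R.
Hypothesis R_resp : responsive Omega i R (ab_marginal A B i).
Implicit Types (X Y : {set O}) (x y : O).
Local Notation level := (ab_level A B i).

Lemma consumption_swap X x y : consumption Omega i X -> x \in X -> y \notin X ->
  consumption Omega i (y |: (X :\ x)).
Proof. by rewrite /consumption => cX xX yX; rewrite cards_swap. Qed.

Lemma consumption_card X Y : consumption Omega i X -> consumption Omega i Y -> #|X| = #|Y|.
Proof. by move=> /eqP -> /eqP ->. Qed.

Lemma resp_swap_weak X x y : consumption Omega i X -> x \in X -> y \notin X ->
  level x <= level y -> R (y |: (X :\ x)) X.
Proof.
move=> cX xX yX le.
have xy : x != y by apply: contraNneq yX => <-.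
have x_out : x \notin y |: (X :\ x) by rewrite !inE negb_or xy eqxx.
have := R_resp (consumption_swap cX xX yX) (setU11 y _) x_out.
have -> : x |: ((y |: (X :\ x)) :\ y) = X.
  apply/setP => z; rewrite !inE; case: (z =P x) => [->|_] //=.
  by case: (z =P y) => [->|] //=; rewrite (negbTE yX).
by move=> ->.
Qed.

Lemma resp_swap_strict X x y : consumption Omega i X -> x \in X -> y \notin X ->
  level x < level y -> ~ R X (y |: (X :\ x)).
Proof. by move=> cX xX yX lt /(R_resp cX xX yX); rewrite /ab_marginal leqNgt lt. Qed.

Lemma resp_pref_of_countA_le X Y : consumption Omega i X -> consumption Omega i Y ->
  Y \subset A i :|: B i -> #|X :&: A i| <= #|Y :&: A i| -> R Y X.
Proof.
case: R_pref => _ R_trans R_refl; move eq_n: #|X :\: Y| => n.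
elim: n X eq_n => [|n IH] X eq_n cX cY YAB le.
  suff -> : X = Y by apply: R_refl.
  apply/eqP; rewrite eqEcard -setD_eq0 -cards_eq0 eq_n eqxx /=.
  by rewrite (consumption_card cY cX).
have XY_gt0 : 0 < #|X :\: Y| by rewrite eq_n.
have [x [y [xXY yYX xyA le_swap]]] := swap_towards_exists (consumption_card cX cY) le XY_gt0.
move: xXY yYX; rewrite !inE => /andP[xY xX] /andP[yX yY].
have cX' := consumption_swap cX xX yX.
apply: (R_trans _ _ _ cY cX' cX); last first.
  exact: resp_swap_weak cX xX yX (ab_level_le xyA (subsetP YAB _ yY)).
apply: IH => //; last by have := cardsI_swap (A i) xX yX; lia.
have -> : (y |: (X :\ x)) :\: Y = (X :\: Y) :\ x.
  apply/setP => z; rewrite !inE; case: (z =P y) => [->|_] /=; first by rewrite yY !andbF.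
  by case: (z \in Y); rewrite ?andbF ?andbT.
by move: eq_n; rewrite (cardsD1 x) !inE xX xY /= => -[].
Qed.

Lemma level_raising_swap_exists X Y : #|X| = #|Y| -> Y \subset A i :|: B i ->
  #|X :&: A i| <= #|Y :&: A i| ->
  #|X :&: A i| < #|Y :&: A i| \/ ~~ (X \subset A i :|: B i) ->
  exists x y, [/\ x \in X, y \notin X, x \notin Y, level x < level y
                & #|X :&: A i| + (y \in A i) <= #|Y :&: A i| + (x \in A i)].
Proof.
move=> XY YAB le [lt|/subsetPn[x xX xAB]].
  have [x [y []]] := strict_swap_exists XY lt.
  rewrite !inE => /andP[xY xX] /andP[yX yY] xA yA.
  by exists x, y; rewrite yA (negbTE xA) ab_level_lt //; split => //; lia.
have xY : x \notin Y by apply: contraNN xAB => /(subsetP YAB).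
have xA : x \notin A i by apply: contraNN xAB; rewrite inE => ->.
have [y [yY yX le_y]] := swap_partner_exists XY le xX xY xA.
exists x, y; split; rewrite ?(negbTE xA) ?addn0 //.
move: xAB (subsetP YAB _ yY); rewrite /ab_level !inE (negbTE xA).
by case: (x \in B i); case: (y \in A i); case: (y \in B i).
Qed.

Lemma resp_not_pref_of_countA X Y : consumption Omega i X -> consumption Omega i Y ->
  Y \subset A i :|: B i -> #|X :&: A i| <= #|Y :&: A i| ->
  #|X :&: A i| < #|Y :&: A i| \/ ~~ (X \subset A i :|: B i) -> ~ R X Y.
Proof.
case: R_pref => _ R_trans _ cX cY YAB le better XY.
have [x [y [xX yX xY lt le_swap]]] :=
  level_raising_swap_exists (consumption_card cX cY) YAB le better.
have cX' := consumption_swap cX xX yX.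
apply: (resp_swap_strict cX xX yX lt); apply: (R_trans _ _ _ cX cY cX' XY).
by apply: resp_pref_of_countA_le => //; have := cardsI_swap (A i) xX yX; lia.
Qed.

Lemma resp_weak_improvement_countA X Y : consumption Omega i X -> consumption Omega i Y ->
  X \subset A i :|: B i -> R Y X ->
  #|X :&: A i| <= #|Y :&: A i| /\
  (#|X :&: A i| = #|Y :&: A i| -> Y \subset A i :|: B i).
Proof.
move=> cX cY XAB YX; have [le|lt] := leqP #|X :&: A i| #|Y :&: A i|; last first.
  by case: (resp_not_pref_of_countA cY cX XAB (ltnW lt) (or_introl lt) YX).
split=> // eq; apply/negPn/negP => YnAB.
by apply: (resp_not_pref_of_countA cY cX XAB _ (or_intror YnAB) YX); rewrite eq.
Qed.

Lemma resp_strict_improvement_countA X Y : consumption Omega i X -> consumption Omega i Y ->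
  X \subset A i :|: B i -> strict R Y X -> #|X :&: A i| < #|Y :&: A i|.
Proof.
move=> cX cY XAB [_ XnY]; rewrite ltnNge; apply: contra_notN XnY.
exact: resp_pref_of_countA_le.
Qed.

End ResponsiveDominance.

Lemma perm_map_next (T : eqType) (s : seq T) : uniq s -> perm_eq (map (next s) s) s.
Proof.
move=> us; apply: uniq_perm => //.
  by rewrite (map_inj_uniq (can_inj (prev_next us))).
move=> x; apply/mapP/idP => [[y ys ->]|xs]; first by rewrite mem_next.
by exists (prev s x); rewrite ?mem_prev // next_prev.
Qed.

Lemma map_not_uniq_split (T U : eqType) (f : T -> U) (s : seq T) : ~~ uniq (map f s) ->
  exists s1 x p1 y p2, s = s1 ++ x :: p1 ++ y :: p2 /\ f x = f y.
Proof.
elim: s => [|a s IH] //=; rewrite negb_and negbK => /orP[/mapP[y ys ey]|/IH].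
  by case/splitPr: ys IH => p1 p2 _; exists [::], a, p1, y, p2.
by move=> [s1 [x [p1 [y [p2 [-> e]]]]]]; exists (a :: s1), x, p1, y, p2.
Qed.

Lemma fcycle_orbit_iter (T : finType) (f : T -> T) x :
  exists k, fcycle f (orbit f (iter k f x)).
Proof.
have /trajectP[k lt_k_order iter_order_k] := looping_order f x.
exists k; apply/(orbitPcycle 0 3); exists (order f x - k.+1).
by rewrite -iterD subnSK // subnK ?(ltnW lt_k_order).
Qed.

Section Trades.
Variables (I O : finType) (A B mu : I -> {set O}).
Hypothesis mu_disj : forall i j, i != j -> [disjoint mu i & mu j].

Definition nondecreasing_swap j (g r : O) :=
  (r \in A j :|: B j) && ((g \in A j) ==> (r \in A j)).
Definition increasing_swap j (g r : O) := (r \in A j) && (g \notin A j).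

(* A node (j, o) records that agent j receives o; along an edge x -> y, agent
   y.1 hands over the object x.2 in exchange for y.2. *)
Definition trade_edge (Out : I -> {set O}) (x y : I * O) :=
  (x.2 \in Out y.1) && nondecreasing_swap y.1 x.2 y.2.

Definition trade (In Out : I -> {set O}) (ws : seq (I * O)) :=
  [/\ ws != [::], cycle (trade_edge Out) ws,
      all (fun x => x.2 \in In x.1) ws & uniq (map snd ws)].

Definition increasing_trade (ws : seq (I * O)) :=
  has (fun x => increasing_swap (next ws x).1 x.2 (next ws x).2) ws.

Definition IR_improving_cycle_exists := exists x0 c,
  [/\ is_cycle mu x0 c, cycle_cw_IR A B x0 c & pareto_improving_cycle A mu x0 c].

(* In j and Out j are the objects agent j receives and gives up when passing
   from mu to another matching. *)
Record balanced_exchange (In Out : I -> {set O}) : Prop := BalancedExchange {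
  out_sub_mu : forall j, Out j \subset mu j;
  in_disj_mu : forall j, [disjoint In j & mu j];
  in_disj : forall j j', j != j' -> [disjoint In j & In j'];
  in_from_out : forall j o, o \in In j -> exists j', o \in Out j';
  card_in_out : forall j, #|In j| = #|Out j|;
  countA_out_in : forall j, #|Out j :&: A j| <= #|In j :&: A j|;
  in_AB_of_countA_eq : forall j,
    #|In j :&: A j| = #|Out j :&: A j| -> In j \subset A j :|: B j }.

Lemma nondecreasing_swap_cross j g1 r1 g2 r2 :
  nondecreasing_swap j g1 r1 -> nondecreasing_swap j g2 r2 ->
  nondecreasing_swap j g1 r2 || nondecreasing_swap j g2 r1.
Proof.
rewrite /nondecreasing_swap !inE.
by case: (g1 \in A j); case: (r1 \in A j); case: (g2 \in A j); case: (r2 \in A j);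
  case: (r1 \in B j); case: (r2 \in B j).
Qed.

Section BalancedExchange.
Variables (In Out : I -> {set O}).
Hypothesis bal : balanced_exchange In Out.

Lemma out_giver_uniq j j' o : o \in Out j -> o \in Out j' -> j = j'.
Proof.
move=> oj oj'; apply/eqP; apply: contraT => ne.
have := disjointFr (mu_disj ne) (subsetP (out_sub_mu bal j) _ oj).
by rewrite (subsetP (out_sub_mu bal j') _ oj').
Qed.

Lemma in_receiver_uniq j j' o : o \in In j -> o \in In j' -> j = j'.
Proof.
move=> oj oj'; apply/eqP; apply: contraT => ne.
by rewrite (disjointFr (in_disj bal ne) oj) in oj'.
Qed.

Section TradeAsCycle.
Variables (x0 : I * O) (c : seq (I * O)).
Hypothesis ws_trade : trade In Out (x0 :: c).
Local Notation L := (size (x0 :: c)).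

Lemma trade_at k : k < L ->
  [/\ cprev x0 c k \in mu (cag x0 c k), cob x0 c k \in In (cag x0 c k)
    & nondecreasing_swap (cag x0 c k) (cprev x0 c k) (cob x0 c k)].
Proof.
case: ws_trade => _ ws_cycle ws_in _ lk.
have /andP[gives swap] := cycle_nth_prev ws_cycle lk.
rewrite cprevE; split => //; first exact: (subsetP (out_sub_mu bal _)).
exact: all_nthP ws_in k lk.
Qed.

Lemma trade_receives_new k : k < L -> cob x0 c k \notin mu (cag x0 c k).
Proof. by case/trade_at => _ r_in _; rewrite (disjointFr (in_disj_mu bal _) r_in). Qed.

Lemma trade_is_cycle : uniq (map fst (x0 :: c)) -> is_cycle mu x0 c.
Proof.
case: ws_trade => _ _ _ u2 u1; split => // [k /andP[k_gt0 lk]|]; last first.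
  by case: (trade_at (ltn0Sn _)).
split; last exact: trade_receives_new.
have [gives _ _] := trade_at lk.
by move: gives; rewrite /cprev; case: eqP k_gt0 => [->|].
Qed.

Lemma trade_cw_IR : cycle_cw_IR A B x0 c.
Proof. by move=> k /trade_at[_ _ /andP[]]. Qed.

Lemma trade_pareto_improving : uniq (map fst (x0 :: c)) ->
  increasing_trade (x0 :: c) -> pareto_improving_cycle A mu x0 c.
Proof.
move=> u /hasP[x xws up].
have swap_count k : k < L -> #|add_cycle mu x0 c (cag x0 c k) :&: A (cag x0 c k)|
      + (cprev x0 c k \in A (cag x0 c k))
    = #|mu (cag x0 c k) :&: A (cag x0 c k)| + (cob x0 c k \in A (cag x0 c k)).
  move=> lk; have [gives _ _] := trade_at lk.
  by rewrite add_cycle_at // cardsI_swap // trade_receives_new.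
split.
  have [k [lk prev_x next_x]] := next_pos_exists xws.
  exists (cag x0 c k); rewrite /increases; have := swap_count k lk.
  move: up; rewrite /increasing_swap -next_x -prev_x -/(cag x0 c k) -/(cob x0 c k).
  by rewrite cprevE -/(cob x0 c (prev_pos x0 c k)) => /andP[-> /negbTE ->]; lia.
move=> i; rewrite /decreases.
case: (boolP (i \in map fst (x0 :: c))) => iC; last by rewrite add_cycle_out // ltnn.
have [k lk ->] := cycle_agentP iC; have [_ _ /andP[_ keepA]] := trade_at lk.
by move: keepA (swap_count k lk); case: (cprev _ _ _ \in _); case: (cob _ _ _ \in _) => //=; lia.
Qed.

End TradeAsCycle.

Lemma IR_improving_cycle_of_trade ws : trade In Out ws -> uniq (map fst ws) ->
  increasing_trade ws -> IR_improving_cycle_exists.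
Proof.
case: ws => [[]|x0 c]; first by rewrite eqxx.
move=> ws_trade u up; exists x0, c; split.
- exact: trade_is_cycle.
- exact: trade_cw_IR.
- exact: trade_pareto_improving.
Qed.

Lemma trade_rot n ws : trade In Out ws -> trade In Out (rot n ws).
Proof.
case=> ne ws_cycle ws_in ws_u; split.
- by rewrite -size_eq0 size_rot size_eq0.
- by rewrite rot_cycle.
- by apply/allP => x; rewrite mem_rot; apply: (allP ws_in).
- by rewrite map_rot rot_uniq.
Qed.

(* Agent x.1 = y.1 receives both x.2 and y.2; cutting the trade at these two
   nodes leaves two closed trades, and one of the two resulting swaps of that
   agent is still nondecreasing. *)
Lemma trade_split_at x p1 y q : trade In Out (x :: p1 ++ y :: q) -> x.1 = y.1 ->
  trade In Out (x :: p1) \/ trade In Out (y :: q).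
Proof.
rewrite /trade -cat_cons => -[_ ws_cycle + +] same.
rewrite all_cat map_cat cat_uniq => /andP[in1 in2] /and3P[u1 _ u2].
move: ws_cycle; rewrite /= rcons_cat cat_path /= rcons_path.
case/and4P=> p1_path /andP[o1 swap1] q_path /andP[o2 swap2].
rewrite -same in o1 swap1.
case/orP: (nondecreasing_swap_cross swap1 swap2) => swap; [left|right]; split => //.
  by rewrite /= rcons_path p1_path /trade_edge o1 swap.
by rewrite /= rcons_path q_path /trade_edge -same o2 swap.
Qed.

Lemma trade_split ws : trade In Out ws -> ~~ uniq (map fst ws) ->
  exists2 ws', trade In Out ws' & size ws' < size ws.
Proof.
move=> ws_trade /map_not_uniq_split[s1 [x [p1 [y [p2 [ews same]]]]]].
have := trade_rot (size s1) ws_trade.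
rewrite ews rot_size_cat cat_cons -catA cat_cons => /trade_split_at/(_ same)[t|t].
  by exists (x :: p1); rewrite // !size_cat /= size_cat /=; lia.
by exists (y :: p2 ++ s1); rewrite // !size_cat /= !size_cat /=; lia.
Qed.

Lemma trade_shorten ws : trade In Out ws ->
  IR_improving_cycle_exists \/ exists2 ws', trade In Out ws' & ~~ increasing_trade ws'.
Proof.
move=> ws_trade; have [n] := ubnP (size ws).
elim: n => // n IH in ws ws_trade * => /ltnSE size_ws.
have [up|flat] := boolP (increasing_trade ws); last by right; exists ws.
have [u|nu] := boolP (uniq (map fst ws)).
  by left; apply: IR_improving_cycle_of_trade ws_trade u up.
have [ws' ws'_trade lt] := trade_split ws_trade nu.
by apply: IH ws'_trade _; apply: leq_trans lt size_ws.
Qed.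

Section TradeRemoval.
Variable ws : seq (I * O).
Hypothesis ws_trade : trade In Out ws.
Local Notation S := [set o in map snd ws].

Lemma cardsI_trade Z : #|Z :&: S| = count (fun x => x.2 \in Z) ws.
Proof. by case: ws_trade => _ _ _ u; rewrite card_setI_uniq // count_map. Qed.

(* Reindexing by [next ws] matches each object an agent receives along the
   trade with the object it hands over. *)
Lemma count_trade_in_out j (P : pred O) :
  {in ws, forall x, (next ws x).1 = j -> P x.2 = P (next ws x).2} ->
  count (fun x => (x.2 \in In j) && P x.2) ws =
  count (fun x => (x.2 \in Out j) && P x.2) ws.
Proof.
case: ws_trade => _ ws_cycle ws_in u same_P.
rewrite -(permP (perm_map_next (map_uniq u))) count_map.
apply: eq_in_count => x xws /=.
have /andP[x_out _] := next_cycle ws_cycle xws.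
have y_in : (next ws x).2 \in In (next ws x).1 by apply: (allP ws_in); rewrite mem_next.
have [e|ne] := eqVneq (next ws x).1 j; first by rewrite -e y_in x_out (same_P x xws e).
have -> : ((next ws x).2 \in In j) = false.
  by apply: contraNF ne => /in_receiver_uniq/(_ y_in) ->.
have -> : (x.2 \in Out j) = false.
  by apply: contraNF ne => /out_giver_uniq/(_ x_out) ->.
by [].
Qed.

Lemma cardsI_trade_in_out j : #|In j :&: S| = #|Out j :&: S|.
Proof.
rewrite !cardsI_trade; have := @count_trade_in_out j predT (fun _ _ _ => erefl).
by rewrite (eq_count (fun x => andbT (x.2 \in In j))) (eq_count (fun x => andbT (x.2 \in Out j))).
Qed.

Lemma cardsAI_trade_in_out j : ~~ increasing_trade ws ->
  #|In j :&: A j :&: S| = #|Out j :&: A j :&: S|.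
Proof.
move=> flat; rewrite !cardsI_trade.
rewrite (eq_count (fun x => in_setI x.2 (In j) (A j))).
rewrite (eq_count (fun x => in_setI x.2 (Out j) (A j))).
apply: (@count_trade_in_out j (fun o => o \in A j)) => x xws e /=.
case: ws_trade => _ ws_cycle _ _.
have /andP[_ swap] := next_cycle ws_cycle xws.
move: swap (hasPn flat x xws); rewrite /nondecreasing_swap /increasing_swap e.
case/andP=> _ /implyP keepA not_up; apply/idP/idP => [/keepA //|nextA].
by apply: contraNT not_up => xNA; rewrite nextA xNA.
Qed.

Lemma balanced_exchange_remove_trade : ~~ increasing_trade ws ->
  balanced_exchange (fun j => In j :\: S) (fun j => Out j :\: S).
Proof.
move=> flat.
have cardsDA Z j : #|(Z :\: S) :&: A j| = #|Z :&: A j| - #|Z :&: A j :&: S|.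
  by rewrite setIDAC cardsD.
have cardsIS_le Z : #|Z :&: S| <= #|Z| by apply/subset_leq_card/subsetIl.
split.
- by move=> j; apply: subset_trans (out_sub_mu bal j); apply: subsetDl.
- by move=> j; apply: disjointWl (in_disj_mu bal j); apply: subsetDl.
- by move=> j j' ne; apply: disjointW (in_disj bal ne); apply: subsetDl.
- move=> j o; rewrite inE => /andP[oS /(in_from_out bal)[j' oj']].
  by exists j'; rewrite inE oS.
- by move=> j; rewrite !cardsD cardsI_trade_in_out (card_in_out bal).
- move=> j; rewrite !cardsDA cardsAI_trade_in_out //.
  by have := countA_out_in bal j; lia.
- move=> j; rewrite !cardsDA cardsAI_trade_in_out // => e.
  apply: subset_trans (in_AB_of_countA_eq bal _); first exact: subsetDl.
  by have := cardsIS_le (Out j :&: A j); have := countA_out_in bal j; lia.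
Qed.

Lemma countA_remove_trade j : ~~ increasing_trade ws ->
  #|Out j :&: A j| < #|In j :&: A j| ->
  #|(Out j :\: S) :&: A j| < #|(In j :\: S) :&: A j|.
Proof.
move=> flat lt; rewrite !setIDAC !cardsD cardsAI_trade_in_out //.
have : #|Out j :&: A j :&: S| <= #|Out j :&: A j| by apply/subset_leq_card/subsetIl.
lia.
Qed.

Lemma sum_card_remove_trade : \sum_j #|In j :\: S| < \sum_j #|In j|.
Proof.
case: ws_trade => ne _ ws_in _.
have [x xws] : exists x, x \in ws by case: (ws) ne => [|x s] //; exists x; rewrite mem_head.
rewrite (bigD1 x.1) //= [X in _ < X](bigD1 x.1) //= -addSn.
apply: leq_add; last by apply: leq_sum => j _; apply/subset_leq_card/subsetDl.
apply: proper_card; apply/properP; split; first exact: subsetDl.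
by exists x.2; [apply: (allP ws_in) | rewrite !inE (map_f snd xws)].
Qed.

End TradeRemoval.

Lemma nondecreasing_swap_exists j o : o \in Out j ->
  exists2 r, r \in In j & nondecreasing_swap j o r.
Proof.
move=> o_out; have countA := countA_out_in bal j.
have [oA|oNA] := boolP (o \in A j).
  have /exists_in_of_cardsI_gt0[r r_in rA] : 0 < #|In j :&: A j|.
    by apply: leq_trans countA; apply/card_gt0P; exists o; rewrite inE o_out.
  by exists r; rewrite // /nondecreasing_swap !inE rA implybT.
have [lt|ge] := ltnP #|Out j :&: A j| #|In j :&: A j|.
  have /exists_in_of_cardsI_gt0[r r_in rA] : 0 < #|In j :&: A j| by lia.
  by exists r; rewrite // /nondecreasing_swap !inE rA implybT.
have /card_gt0P[r r_in] : 0 < #|In j|.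
  by rewrite (card_in_out bal j); apply/card_gt0P; exists o.
exists r => //; rewrite /nondecreasing_swap (negbTE oNA) andbT.
by apply: (subsetP (in_AB_of_countA_eq bal _)); rewrite //; lia.
Qed.

Lemma trade_exists j0 o0 : o0 \in In j0 -> exists ws, trade In Out ws.
Proof.
move=> o0_in.
pose giver o := odflt j0 [pick j | o \in Out j].
pose reply j o := odflt o [pick r | (r \in In j) && nondecreasing_swap j o r].
pose succ (x : I * O) := (giver x.2, reply (giver x.2) x.2).
pose received := [pred x : I * O | x.2 \in In x.1].
have succ_edge x : received x -> received (succ x) && trade_edge Out x (succ x).
  move=> /= /(in_from_out bal)[j oj]; rewrite /succ /giver.
  case: pickP => [j' oj' /=|/(_ j)]; last by rewrite oj.
  rewrite /reply; case: pickP => [r /andP[r_in swap]|none] /=.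
    by rewrite r_in /trade_edge /= oj' swap.
  by have [r r_in swap] := nondecreasing_swap_exists oj'; move: (none r); rewrite r_in swap.
have iter_received k x : received x -> received (iter k succ x).
  by elim: k => //= k IH /IH /succ_edge /andP[].
have [k orbit_cycle] := fcycle_orbit_iter succ (j0, o0).
set z := iter k succ (j0, o0).
have orbit_received : all received (orbit succ z).
  by apply/allP => _ /trajectP[m _ ->]; apply/iter_received/iter_received.
exists (orbit succ z); split => //.
- by rewrite /orbit -orderSpred.
- apply: (sub_in_cycle _ orbit_received orbit_cycle) => x y x_in _ /eqP <-.
  by case/andP: (succ_edge x x_in).
- rewrite (map_inj_in_uniq (f := snd)) ?orbit_uniq // => -[j o] [j' o'] x_in y_in /= eo.
  rewrite -{}eo in y_in *.
  by rewrite (in_receiver_uniq (allP orbit_received _ x_in) (allP orbit_received _ y_in) : j = j').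
Qed.

End BalancedExchange.

Lemma IR_improving_cycle_of_balanced_exchange In Out : balanced_exchange In Out ->
  (exists j, #|Out j :&: A j| < #|In j :&: A j|) -> IR_improving_cycle_exists.
Proof.
move=> bal [j lt]; have [n] := ubnP (\sum_j #|In j|).
elim: n => // n IH in In Out bal lt * => /ltnSE sum_le.
have /exists_in_of_cardsI_gt0[o0 o0_in _] : 0 < #|In j :&: A j| by lia.
have [ws ws_trade] := trade_exists bal o0_in.
have [//|[ws' ws'_trade flat]] := trade_shorten bal ws_trade.
apply: IH (balanced_exchange_remove_trade bal ws'_trade flat) _ _.
  exact: countA_remove_trade.
by have := sum_card_remove_trade ws'_trade; lia.
Qed.

End Trades.

Lemma card_bigcup_disjoint (T J : finType) (F : J -> {set T}) :
  (forall i j, i != j -> [disjoint F i & F j]) -> #|\bigcup_i F i| = \sum_i #|F i|.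
Proof.
move=> F_disj; rewrite -sum1_card (partition_disjoint_bigcup _ _ F_disj).
by apply: eq_bigr => i _; rewrite sum1_card.
Qed.

Section Matchings.
Variables (I O : finType) (Omega A B mu : I -> {set O}).
Hypothesis Omega_endow : endowment Omega.
Hypothesis mu_match : matching Omega mu.

Lemma matching_cover o : exists j, o \in mu j.
Proof.
case: Omega_endow mu_match => _ Omega_disj Omega_cover [mu_disj mu_card].
have mu_cover : \bigcup_j mu j = [set: O].
  apply/eqP; rewrite eqEcard subsetT /= -Omega_cover.
  by rewrite !card_bigcup_disjoint // (eq_bigr _ (fun i _ => mu_card i)).
have : o \in \bigcup_j mu j by rewrite mu_cover inE.
by case/bigcupP => j _; exists j.
Qed.

(* Component-wise IR at the least preferred endowed object forces every
   object of mu i to lie at least at its level, which is positive. *)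
Lemma cw_IR_subset_AB : AB_profile Omega A B -> cw_IR Omega (ab_marginal A B) mu ->
  forall i, mu i \subset A i :|: B i.
Proof.
case: Omega_endow mu_match => Omega_ne _ _ [_ mu_card] AB mu_IR i.
have [w0 w0_in] := set0Pn _ (Omega_ne i).
have [w w_in w_min] := arg_minnP (ab_level A B i) w0_in.
have all_above : [set o in Omega i | ab_marginal A B i o w] = Omega i.
  by apply/setP => o; rewrite !inE /ab_marginal; case: (boolP (o \in Omega i)) => // /w_min.
have mu_above : [set o in mu i | ab_marginal A B i o w] = mu i.
  apply/eqP; rewrite eqEcard; apply/andP; split.
    by apply/subsetP => o; rewrite inE => /andP[].
  by rewrite mu_card -{1}all_above mu_IR.
have level_pos o : o \in A i :|: B i = (0 < ab_level A B i o).
  by rewrite /ab_level !inE; case: (o \in A i); case: (o \in B i).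
have w_pos : 0 < ab_level A B i w by have [_ /subsetP/(_ w w_in)] := AB i; rewrite level_pos.
apply/subsetP => o; rewrite -mu_above inE level_pos => /andP[_ o_above].
exact: leq_trans w_pos o_above.
Qed.

Lemma balanced_exchange_of_matchings mu' : matching Omega mu' ->
  (forall j, #|mu j :&: A j| <= #|mu' j :&: A j|) ->
  (forall j, #|mu j :&: A j| = #|mu' j :&: A j| -> mu' j \subset A j :|: B j) ->
  balanced_exchange A B mu (fun j => mu' j :\: mu j) (fun j => mu j :\: mu' j).
Proof.
case: mu_match => mu_disj mu_card [mu'_disj mu'_card] le_countA eq_countA.
have countA_exchange j := cardsI_exchange (mu j) (mu' j) (A j).
split.
- by move=> j; apply: subsetDl.
- by move=> j; rewrite disjoints_subset setDE subsetIr.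
- by move=> j j' ne; apply: disjointW (mu'_disj _ _ ne); apply: subsetDl.
- move=> j o; rewrite inE => /andP[o_mu o_mu'].
  have [j' o_j'] := matching_cover o; exists j'; rewrite inE o_j' andbT.
  have ne : j != j' by apply: contraNneq o_mu => ->.
  by rewrite (disjointFr (mu'_disj _ _ ne) o_mu').
- by move=> j; rewrite !cardsD mu_card mu'_card setIC.
- by move=> j; have := countA_exchange j; have := le_countA j; lia.
- move=> j e; apply: subset_trans (eq_countA j _); first exact: subsetDl.
  by have := countA_exchange j; lia.
Qed.

End Matchings.

Theorem lemma2 (I O : finType) (Omega : I -> {set O})
  (A B : I -> {set O}) (mu : I -> {set O}) :
  endowment Omega ->
  AB_profile Omega A B ->
  matching Omega mu ->
  cw_IR Omega (ab_marginal A B) mu ->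
  (unamb_efficient Omega (ab_marginal A B) mu <->
   ~ (exists (x0 : I * O) (c : seq (I * O)),
        [/\ is_cycle mu x0 c, cycle_cw_IR A B x0 c & pareto_improving_cycle A mu x0 c])).
Proof.
move=> endow AB mu_match mu_IR; split.
  by move=> UE [x0 [c]]; apply: unamb_efficient_no_IR_improving_cycle mu_match UE.
move=> no_cycle R R_pref R_resp mu' mu'_match [weak [j0 strict]]; apply: no_cycle.
have mu_AB := cw_IR_subset_AB endow mu_match AB mu_IR.
have [[mu_disj mu_card] [_ mu'_card]] := (mu_match, mu'_match).
have cmu j : consumption Omega j (mu j) by rewrite /consumption mu_card.
have cmu' j : consumption Omega j (mu' j) by rewrite /consumption mu'_card.
have countA j :=
  resp_weak_improvement_countA (R_pref j) (R_resp j) (cmu j) (cmu' j) (mu_AB j) (weak j).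
apply: (IR_improving_cycle_of_balanced_exchange mu_disj
  (balanced_exchange_of_matchings endow mu_match mu'_match
     (fun j => (countA j).1) (fun j => (countA j).2))).
exists j0; have := cardsI_exchange (mu j0) (mu' j0) (A j0).
have := resp_strict_improvement_countA (R_pref j0) (R_resp j0) (cmu j0) (cmu' j0) (mu_AB j0) strict.
lia.
Qed.
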